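(* Let $p_1\equiv p_2\equiv1\pmod4$ be primes, $d=2p_1p_2$, $k=\mathbb{Q}(\sqrt d,i)$, and suppose the fundamental unit $\varepsilon_d$ of $\mathbb{Q}(\sqrt d)$ has $N(\varepsilon_d)=-1$. (i) If $\sqrt{\varepsilon_d}$ has the form $\tfrac12[y_1(1+i)\sqrt{(1\pm i)\pi_1\pi_3}+y_2(1-i)\sqrt{(1\mp i)\pi_2\pi_4}]$ with $y_1,y_2\in\mathbb{Z}[i]$, then the ideals $\mathcal{H}_0\mathcal{H}_1\mathcal{H}_3$ and $\mathcal{H}_0\mathcal{H}_2\mathcal{H}_4$ are principal in $k$. (ii) If $\sqrt{\varepsilon_d}$ has the form $\tfrac12[y_1(1+i)\sqrt{(1\pm i)\pi_1\pi_4}+y_2(1-i)\sqrt{(1\mp i)\pi_2\pi_3}]$ with $y_1,y_2\in\mathbb{Z}[i]$, then $\mathcal{H}_0\mathcal{H}_1\mathcal{H}_4$ and $\mathcal{H}_0\mathcal{H}_2\mathcal{H}_3$ are principal in $k$.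
   Context: $i=\sqrt{-1}$. Write $p_1=e^2+4f^2$, $p_2=g^2+4h^2$ with integers $e,f,g,h$, and set $\pi_1=e+2if$, $\pi_2=e-2if$, $\pi_3=g+2ih$, $\pi_4=g-2ih$. For $j=1,\dots,4$, $\mathcal{H}_j$ is the prime ideal of $k$ above $\pi_j$ (so $\mathcal{H}_j^2=\pi_j\mathcal{O}_k$), and $\mathcal{H}_0$ is the prime ideal of $k$ above $1+i$ (so $\mathcal{H}_0^2=(1+i)\mathcal{O}_k$). $N$ is the norm from $\mathbb{Q}(\sqrt d)$ to $\mathbb{Q}$. (One of the two forms always occurs.) *)

From HB Require Import structures.
From mathcomp Require Import all_boot all_order all_algebra all_field.
Set Implicit Arguments. Unset Strict Implicit. Unset Printing Implicit Defensive.
Import Order.TTheory GRing.Theory Num.Theory.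
Local Open Scope ring_scope.

Definition gauss_int (y : algC) : Prop := ('Re y \in Num.int) /\ ('Im y \in Num.int).

Definition in_Qsqrt (d : nat) (x : algC) : Prop :=
  exists a b : rat, x = ratr a + ratr b * sqrtC d%:R.

Definition Qsqrt_unit (d : nat) (u : algC) : Prop :=
  [/\ in_Qsqrt d u, u \in Aint & u^-1 \in Aint].

(* The fundamental unit eps_d: the smallest unit of O_{Q(sqrt d)} larger than 1
   (Q(sqrt d) embedded in algC with sqrtC d > 0 real). *)
Definition fund_unit (d : nat) (eps : algC) : Prop :=
  [/\ Qsqrt_unit d eps, 1 < eps &
      forall u, Qsqrt_unit d u -> 1 < u -> eps <= u].

Definition Qsqrt_norm_is (d : nat) (x : algC) (n : rat) : Prop :=
  exists a b : rat, x = ratr a + ratr b * sqrtC d%:R /\ n = a ^+ 2 - d%:R * b ^+ 2.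

Definition in_k (d : nat) (x : algC) : Prop :=
  exists a b c e : rat,
    x = ratr a + ratr b * sqrtC d%:R + 'i * (ratr c + ratr e * sqrtC d%:R).
Definition in_Ok (d : nat) (x : algC) : Prop := in_k d x /\ x \in Aint.

Definition is_ideal (d : nat) (I : algC -> Prop) : Prop :=
  [/\ forall x, I x -> in_Ok d x, I 0,
      forall x y, I x -> I y -> I (x + y) &
      forall r x, in_Ok d r -> I x -> I (r * x)].

Definition ideal_mul (I J : algC -> Prop) : algC -> Prop :=
  fun x => exists s : seq (algC * algC),
    (forall p, p \in s -> I p.1 /\ J p.2) /\ x = \sum_(p <- s) p.1 * p.2.

Definition pideal (d : nat) (alpha : algC) : algC -> Prop :=
  fun x => exists r, in_Ok d r /\ x = alpha * r.

Definition ideal_eq (I J : algC -> Prop) : Prop := forall x, I x <-> J x.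

Definition is_principal (d : nat) (I : algC -> Prop) : Prop :=
  exists alpha, in_Ok d alpha /\ ideal_eq I (pideal d alpha).

(* Prime ideal of O_k (proper, nonzero is implied below by H^2 = pi O_k). *)
Definition is_prime_ideal (d : nat) (I : algC -> Prop) : Prop :=
  [/\ is_ideal d I, ~ I 1 &
      forall x y, in_Ok d x -> in_Ok d y -> I (x * y) -> I x \/ I y].

Definition ideal_above (d : nat) (pi : algC) (H : algC -> Prop) : Prop :=
  is_prime_ideal d H /\ ideal_eq (ideal_mul H H) (pideal d pi).

Definition has_form (eps a b : algC) : Prop :=
  exists y1 y2 r1 r2 : algC,
    [/\ gauss_int y1, gauss_int y2,
        (r1 ^+ 2 = (1 + 'i) * a /\ r2 ^+ 2 = (1 - 'i) * b) \/
        (r1 ^+ 2 = (1 - 'i) * a /\ r2 ^+ 2 = (1 + 'i) * b) &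
        sqrtC eps = (y1 * (1 + 'i) * r1 + y2 * (1 - 'i) * r2) / 2%:R].

From HB Require Import structures.
From mathcomp Require Import all_boot all_order all_algebra all_field.
From mathcomp Require Import ring.
Set Implicit Arguments. Unset Strict Implicit. Unset Printing Implicit Defensive.
Import Order.TTheory GRing.Theory Num.Theory.
Local Open Scope ring_scope.

(* Write J for the product of H_0 with the two primes above pi_1, pi_3 (resp.
   pi_1, pi_4).  Since H_j^2 = pi_j O_k, the ideal J^2 is generated by
   (1 + i) pi_1 pi_3, which agrees up to a unit with alpha^2 for
   alpha = sqrt(eps_d) r_1, where r_1 is the square root occurring in the
   given form of sqrt(eps_d).  That form shows alpha lies in k, and then
   J^2 = alpha^2 O_k forces J = alpha O_k: every x in J has (x / alpha)^2
   integral, so x / alpha is an algebraic integer of k.  The other two ideals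
   are handled in the same way, exchanging the two summands of the form. *)

Lemma Aint_sqr (z : algC) : z ^+ 2 \in Aint -> z \in Aint.
Proof.
move=> z2A; pose q := minCpoly (z ^+ 2).
apply: (@root_monic_Aint (q \Po 'X^2)).
- by rewrite /root horner_comp hornerXn; exact: root_minCpoly.
- apply/monicP; rewrite lead_coef_comp ?size_polyXn //.
  by rewrite lead_coefXn expr1n mulr1; apply/monicP/minCpoly_monic.
- by apply: polyOver_comp => //; rewrite polyOverXn.
Qed.

Lemma Aint_i : 'i \in Aint.
Proof. by apply: Aint_sqr; rewrite sqrCi rpredN rpred1. Qed.

Section QuadraticField.

Variable d : nat.
Local Notation s := (sqrtC (d%:R : algC)).

Lemma sqr_sqrt_d : s ^+ 2 = d%:R.
Proof. by rewrite sqrtCK. Qed.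

Lemma in_Qsqrt_rat q : in_Qsqrt d (ratr q).
Proof. by exists q, 0; rewrite rmorph0 mul0r addr0. Qed.

Lemma in_Qsqrt_sqrt : in_Qsqrt d s.
Proof. by exists 0, 1; rewrite rmorph0 rmorph1 mul1r add0r. Qed.

Lemma in_QsqrtD x y : in_Qsqrt d x -> in_Qsqrt d y -> in_Qsqrt d (x + y).
Proof.
move=> [a [b ->]] [a' [b' ->]]; exists (a + a'), (b + b').
by rewrite !rmorphD /=; ring.
Qed.

Lemma in_QsqrtM x y : in_Qsqrt d x -> in_Qsqrt d y -> in_Qsqrt d (x * y).
Proof.
move=> [a [b ->]] [a' [b' ->]].
exists (a * a' + d%:R * b * b'), (a * b' + b * a').
rewrite !rmorphD !rmorphM /= ratr_nat.
(* Fold sqrtC d first, so that only the free occurrence of d becomes s ^ 2. *)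
by have := sqr_sqrt_d; set t := sqrtC _ => <-; ring.
Qed.

Lemma in_QsqrtN x : in_Qsqrt d x -> in_Qsqrt d (- x).
Proof.
move=> Qx; have -> : - x = ratr (-1) * x by rewrite rmorphN rmorph1 mulN1r.
exact: in_QsqrtM (in_Qsqrt_rat _) Qx.
Qed.

Lemma Qsqrt_norm_inv x m : Qsqrt_norm_is d x m -> m != 0 -> in_Qsqrt d x^-1.
Proof.
move=> [a [b [-> ->]]]; set n := _ - _ => n0.
exists (a / n), (- b / n); apply: mulr1_eq.
have n0' : ratr n != 0 :> algC by rewrite fmorph_eq0.
have nE : ratr n = ratr a ^+ 2 - s ^+ 2 * ratr b ^+ 2 :> algC.
  by rewrite /n rmorphB !rmorphM /= ratr_nat sqr_sqrt_d; ring.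
transitivity ((ratr a ^+ 2 - s ^+ 2 * ratr b ^+ 2) / ratr n : algC).
  rewrite !fmorph_div rmorphN /=; move: (ratr n) n0' => N N0.
  by field.
by rewrite -nE divff.
Qed.

Lemma in_kE x :
  in_k d x <-> exists u v, [/\ in_Qsqrt d u, in_Qsqrt d v & x = u + 'i * v].
Proof.
split=> [[a [b [c [e ->]]]] | [u [v [[a [b ->]] [c [e ->]] ->]]]].
  by exists (ratr a + ratr b * s), (ratr c + ratr e * s); split;
    [exists a, b | exists c, e |].
by exists a, b, c, e.
Qed.

Lemma in_k_Qsqrt x : in_Qsqrt d x -> in_k d x.
Proof.
move=> Qx; apply/in_kE; exists x, (ratr 0); split=> //; first exact: in_Qsqrt_rat.
by rewrite rmorph0 mulr0 addr0.
Qed.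

Lemma in_k_i : in_k d 'i.
Proof.
apply/in_kE; exists (ratr 0), (ratr 1); split; try exact: in_Qsqrt_rat.
by rewrite rmorph0 rmorph1 add0r mulr1.
Qed.

Lemma in_kD x y : in_k d x -> in_k d y -> in_k d (x + y).
Proof.
move=> /in_kE [u [v [Qu Qv ->]]] /in_kE [u' [v' [Qu' Qv' ->]]].
apply/in_kE; exists (u + u'), (v + v'); split; try exact: in_QsqrtD.
ring.
Qed.

Lemma in_kM x y : in_k d x -> in_k d y -> in_k d (x * y).
Proof.
move=> /in_kE [u [v [Qu Qv ->]]] /in_kE [u' [v' [Qu' Qv' ->]]].
apply/in_kE; exists (u * u' - v * v'), (u * v' + v * u'); split.
- by apply: in_QsqrtD; [apply: in_QsqrtM | apply/in_QsqrtN/in_QsqrtM].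
- by apply: in_QsqrtD; apply: in_QsqrtM.
have i2 : 'i ^+ 2 = -1 :> algC by rewrite sqrCi.
by rewrite -[- (v * v')]mulN1r -i2; ring.
Qed.

Lemma in_k_rat q : in_k d (ratr q).
Proof. exact/in_k_Qsqrt/in_Qsqrt_rat. Qed.

Lemma in_k_natV n : in_k d n%:R^-1.
Proof. by rewrite -(ratr_nat _ n) -fmorphV; apply: in_k_rat. Qed.

Lemma in_kN x : in_k d x -> in_k d (- x).
Proof.
move=> kx; have -> : - x = ratr (-1) * x by rewrite rmorphN rmorph1 mulN1r.
exact: in_kM (in_k_rat _) kx.
Qed.

Lemma in_k_sqrt_d x : x ^+ 2 = d%:R -> in_k d x.
Proof.
rewrite -sqr_sqrt_d => /eqP; rewrite eqf_sqr => /orP [] /eqP ->;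
  [|apply: in_kN]; exact/in_k_Qsqrt/in_Qsqrt_sqrt.
Qed.

Lemma in_Ok_int (z : int) : in_Ok d z%:~R.
Proof. by split; [rewrite -ratr_int; apply: in_k_rat | apply: Aint_int]. Qed.

Lemma in_Ok_i : in_Ok d 'i.
Proof. by split; [apply: in_k_i | apply: Aint_i]. Qed.

Lemma in_OkD x y : in_Ok d x -> in_Ok d y -> in_Ok d (x + y).
Proof. by move=> [? ?] [? ?]; split; [apply: in_kD | apply: rpredD]. Qed.

Lemma in_OkM x y : in_Ok d x -> in_Ok d y -> in_Ok d (x * y).
Proof. by move=> [? ?] [? ?]; split; [apply: in_kM | apply: rpredM]. Qed.

Lemma in_OkN x : in_Ok d x -> in_Ok d (- x).
Proof. by move=> [? ?]; split; [apply: in_kN | rewrite rpredN]. Qed.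

Lemma in_Ok_gauss y : gauss_int y -> in_Ok d y.
Proof.
move=> [/intrP [m Rey] /intrP [n Imy]]; rewrite [y]Crect Rey Imy.
by apply: in_OkD; [|apply: in_OkM; [apply: in_Ok_i|]]; apply: in_Ok_int.
Qed.

End QuadraticField.

Section Ideals.

Variable d : nat.
Implicit Types (I J K L : algC -> Prop) (a b x y : algC).

Lemma ideal_mul_mem I J a b : I a -> J b -> ideal_mul I J (a * b).
Proof.
move=> Ia Jb; exists [:: (a, b)]; split; last by rewrite big_seq1.
by move=> p; rewrite inE => /eqP ->.
Qed.

Lemma ideal_mul_ind I J (T : algC -> Prop) :
  T 0 -> (forall x y, T x -> T y -> T (x + y)) ->
  (forall a b, I a -> J b -> T (a * b)) ->
  forall x, ideal_mul I J x -> T x.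
Proof.
move=> T0 TD Tab _ [s [sIJ ->]].
elim: s sIJ => [|p s IHs] sIJ; first by rewrite big_nil.
rewrite big_cons; apply: TD; last by apply: IHs => q sq; apply: sIJ; rewrite inE sq orbT.
by have [Ip Jp] := sIJ p (mem_head _ _); apply: Tab.
Qed.

Lemma ideal_mul0 I J : ideal_mul I J 0.
Proof. by exists [::]; rewrite big_nil. Qed.

Lemma ideal_mulD I J x y :
  ideal_mul I J x -> ideal_mul I J y -> ideal_mul I J (x + y).
Proof.
move=> [s [sIJ ->]] [t [tIJ ->]]; exists (s ++ t); split; last by rewrite big_cat.
by move=> p; rewrite mem_cat => /orP [/sIJ | /tIJ].
Qed.

Lemma ideal_mulS I J K L :
  (forall x, I x -> K x) -> (forall x, J x -> L x) ->
  forall x, ideal_mul I J x -> ideal_mul K L x.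
Proof.
move=> IK JL; apply: ideal_mul_ind => [||a b /IK Ka /JL Lb].
- exact: ideal_mul0.
- exact: ideal_mulD.
- exact: ideal_mul_mem.
Qed.

Lemma ideal_mul_interchange I J K L x y :
  ideal_mul I J x -> ideal_mul K L y ->
  ideal_mul (ideal_mul I K) (ideal_mul J L) (x * y).
Proof.
move=> IJx KLy; elim/ideal_mul_ind: KLy => [|z z' IHz IHz'|c e Kc Le].
- by rewrite mulr0; apply: ideal_mul0.
- by rewrite mulrDr; apply: ideal_mulD.
elim/ideal_mul_ind: IJx => [|z z' IHz IHz'|a b Ia Jb].
- by rewrite mul0r; apply: ideal_mul0.
- by rewrite mulrDl; apply: ideal_mulD.
by rewrite mulrACA; apply: ideal_mul_mem; apply: ideal_mul_mem.
Qed.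

Lemma ideal_mul_ideal I J : is_ideal d I -> is_ideal d J -> is_ideal d (ideal_mul I J).
Proof.
move=> [IOk _ _ IM] [JOk _ _ _]; split.
- move=> x; elim/ideal_mul_ind => [|y y'|a b /IOk Oa /JOk Ob]; last exact: in_OkM.
  + exact: (in_Ok_int _ 0).
  + exact: in_OkD.
- exact: ideal_mul0.
- exact: ideal_mulD.
move=> r x Or; elim/ideal_mul_ind => [|y y' IHy IHy'|a b Ia Jb].
- by rewrite mulr0; apply: ideal_mul0.
- by rewrite mulrDr; apply: ideal_mulD.
by rewrite mulrA; apply: ideal_mul_mem => //; apply: IM.
Qed.

Lemma pideal0 a : pideal d a 0.
Proof. by exists 0; rewrite mulr0; split; first exact: (in_Ok_int _ 0). Qed.

Lemma pideal_id a : pideal d a a.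
Proof. by exists 1; rewrite mulr1; split; first exact: (in_Ok_int _ 1). Qed.

Lemma pidealD a x y : pideal d a x -> pideal d a y -> pideal d a (x + y).
Proof.
move=> [r [Or ->]] [r' [Or' ->]]; exists (r + r').
by rewrite mulrDr; split; first exact: in_OkD.
Qed.

Lemma pideal_mul a b x :
  ideal_mul (pideal d a) (pideal d b) x -> pideal d (a * b) x.
Proof.
elim/ideal_mul_ind => [|y y'|_ _ [r [Or ->]] [r' [Or' ->]]].
- exact: pideal0.
- exact: pidealD.
by exists (r * r'); rewrite mulrACA; split; first exact: in_OkM.
Qed.

Lemma pideal_unit u v a :
  in_Ok d u -> in_Ok d v -> u * v = 1 -> ideal_eq (pideal d (u * a)) (pideal d a).
Proof.
move=> Ou Ov uv x; split=> [[r [Or ->]] | [r [Or ->]]].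
  by exists (u * r); split; [exact: in_OkM | rewrite mulrCA mulrA].
exists (v * r); split; first exact: in_OkM.
by rewrite mulrACA uv mul1r.
Qed.

Lemma ideal_mul_sqr_pideal I J a b :
  is_ideal d I -> is_ideal d J ->
  ideal_eq (ideal_mul I I) (pideal d a) -> ideal_eq (ideal_mul J J) (pideal d b) ->
  ideal_eq (ideal_mul (ideal_mul I J) (ideal_mul I J)) (pideal d (a * b)).
Proof.
move=> idI idJ IIa JJb x; split.
  elim/ideal_mul_ind => [|y y'|u v IJu IJv]; [exact: pideal0 | exact: pidealD |].
  apply: pideal_mul; move: (ideal_mul_interchange IJu IJv).
  by apply: ideal_mulS => z; [move/IIa | move/JJb].
have idIJ := ideal_mul_ideal idI idJ.
have [_ _ _ IJIJr] := ideal_mul_ideal idIJ idIJ.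
move=> [r [Or ->]]; rewrite mulrC; apply: IJIJr => //.
by apply: ideal_mul_interchange; [apply/IIa | apply/JJb]; apply: pideal_id.
Qed.

Lemma ideal_sqr_principal J al be :
  is_ideal d J -> in_Ok d al -> in_k d be -> al * be = 1 ->
  ideal_eq (ideal_mul J J) (pideal d (al ^+ 2)) -> is_principal d J.
Proof.
move=> [JOk J0 JD JM] Oal kbe albe JJal.
have Jdiv x : J x -> in_Ok d (x * be).
  move=> Jx; have [r [Or xx]] := (JJal (x * x)).1 (ideal_mul_mem Jx Jx).
  have xbe2 : (x * be) ^+ 2 = r.
    by rewrite exprMn expr2 xx mulrAC -exprMn albe expr1n mul1r.
  split; first by apply: in_kM => //; case: (JOk x Jx).
  by apply: Aint_sqr; rewrite xbe2; case: Or.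
exists al; split => // x; split=> [Jx | [r [Or ->]]].
  by exists (x * be); split; [exact: Jdiv | rewrite mulrCA albe mulr1].
suff Jal : J al by rewrite mulrC; exact: JM Or Jal.
have -> : al = al ^+ 2 * be by rewrite expr2 -mulrA albe mulr1.
have := (JJal _).2 (pideal_id (al ^+ 2)).
apply: (ideal_mul_ind (T := fun z => J (z * be))) => [|y y'|a b Ja Jb].
- by rewrite mul0r.
- by rewrite mulrDl; apply: JD.
by rewrite -mulrA mulrC; apply: JM => //; apply: Jdiv.
Qed.

End Ideals.

Lemma ideal_above3_principal d (p0 pa pb al be u v : algC) H0 Ha Hb :
  ideal_above d p0 H0 -> ideal_above d pa Ha -> ideal_above d pb Hb ->
  in_Ok d al -> in_k d be -> al * be = 1 ->
  in_Ok d u -> in_Ok d v -> u * v = 1 -> al ^+ 2 = u * (p0 * pa * pb) ->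
  is_principal d (ideal_mul (ideal_mul H0 Ha) Hb).
Proof.
move=> [[id0 _ _] E0] [[ida _ _] Ea] [[idb _ _] Eb] Oal kbe albe Ou Ov uv al2.
have id0a := ideal_mul_ideal id0 ida.
have E0a := ideal_mul_sqr_pideal id0 ida E0 Ea.
apply: (ideal_sqr_principal (ideal_mul_ideal id0a idb) Oal kbe albe) => x.
rewrite al2; apply: iff_trans (ideal_mul_sqr_pideal id0a idb E0a Eb x) _.
exact: iff_sym (pideal_unit _ Ou Ov uv x).
Qed.

Lemma mul_1pi_1mi : (1 + 'i) * (1 - 'i) = 2%:R :> algC.
Proof. by transitivity (1 - 'i ^+ 2 : algC); [ring | rewrite sqrCi opprK]. Qed.

Section SqrtForm.

Variables (d : nat) (eps eps' y y' r r' w w' A B : algC).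
Hypotheses (d_gt0 : (0 < d)%N) (Oeps : in_Ok d eps) (keps' : in_k d eps').
Hypotheses (epsK : eps * eps' = 1) (ky : in_k d y) (ky' : in_k d y').
Hypotheses (Ow : in_Ok d w) (kw' : in_k d w') (wK : w * w' = 1).
Hypotheses (OA : in_Ok d A) (kB : in_k d B) (dAB : 2%:R * (A * B) = d%:R).
Hypotheses (r2 : r ^+ 2 = w * ((1 + 'i) * A)) (r'2 : r' ^+ 2 = w' * ((1 - 'i) * B)).
Hypothesis sqrt_eps : sqrtC eps = (y * r + y' * r') / 2%:R.

Lemma sqrt_form_sqr : (sqrtC eps * r) ^+ 2 = eps * w * ((1 + 'i) * A).
Proof. by rewrite exprMn sqrtCK r2 mulrA. Qed.

Lemma sqrt_form_in_Ok : in_Ok d (sqrtC eps * r).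
Proof.
have O1pi : in_Ok d (1 + 'i) by apply: in_OkD; [exact: (in_Ok_int d 1) | exact: in_Ok_i].
have kr2 : in_k d (r ^+ 2) by rewrite r2; apply: (in_OkM Ow (in_OkM O1pi OA)).1.
have krr' : in_k d (r * r').
  apply: in_k_sqrt_d; rewrite exprMn r2 r'2 -dAB -mul_1pi_1mi.
  transitivity (w * w' * ((1 + 'i) * (1 - 'i)) * (A * B)); first by ring.
  by rewrite wK mul1r.
split.
  have -> : sqrtC eps * r = (y * r ^+ 2 + y' * (r * r')) * 2%:R^-1.
    by rewrite sqrt_eps; ring.
  by apply: in_kM; [apply: in_kD; apply: in_kM | exact: in_k_natV].
apply: Aint_sqr; rewrite sqrt_form_sqr.
by case: (in_OkM (in_OkM Oeps Ow) (in_OkM O1pi OA)).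
Qed.

(* The inverse of (sqrt(eps) r)^2 = eps w (1 + i) A is eps' w' (1 - i) B / d. *)
Lemma sqrt_form_unit : exists2 be, in_k d be & sqrtC eps * r * be = 1.
Proof.
have k1mi : in_k d (1 - 'i).
  by apply: in_kD; [exact: (in_Ok_int d 1).1 | exact/in_kN/in_k_i].
exists (sqrtC eps * r * (eps' * w' * (1 - 'i) * B * d%:R^-1)).
  apply: in_kM; first exact: sqrt_form_in_Ok.1.
  apply: in_kM; last exact: in_k_natV.
  by apply: in_kM => //; apply: in_kM => //; apply: in_kM.
rewrite mulrA -expr2 sqrt_form_sqr.
transitivity (eps * eps' * (w * w') * ((1 + 'i) * (1 - 'i)) * (A * B) / d%:R).
  by ring.
by rewrite epsK wK mul_1pi_1mi !mul1r dAB divff // pnatr_eq0 -lt0n.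
Qed.

End SqrtForm.

Lemma sqrt_form_principal d (eps eps' y y' r r' pa pb B : algC) H0 Ha Hb :
  (0 < d)%N -> in_Ok d eps -> in_Ok d eps' -> eps * eps' = 1 ->
  in_k d y -> in_k d y' -> in_Ok d pa -> in_Ok d pb -> in_k d B ->
  2%:R * (pa * pb * B) = d%:R ->
  (r ^+ 2 = (1 + 'i) * (pa * pb) /\ r' ^+ 2 = (1 - 'i) * B) \/
  (r ^+ 2 = (1 - 'i) * (pa * pb) /\ r' ^+ 2 = (1 + 'i) * B) ->
  sqrtC eps = (y * r + y' * r') / 2%:R ->
  ideal_above d (1 + 'i) H0 -> ideal_above d pa Ha -> ideal_above d pb Hb ->
  is_principal d (ideal_mul (ideal_mul H0 Ha) Hb).
Proof.
move=> d_gt0 Oeps Oeps' epsK ky ky' Opa Opb kB dAB rr' sqrt_eps H0i Hapa Hbpb.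
have i2 : 'i ^+ 2 = -1 :> algC by rewrite sqrCi.
have [O1 Oi] := (in_Ok_int d 1, in_Ok_i d).
(* 1 - i = -i (1 + i) and 1 + i = i (1 - i). *)
have [w [w' [Ow Ow' wK [r2 r'2]]]] : exists w w', [/\ in_Ok d w, in_Ok d w',
    w * w' = 1 & r ^+ 2 = w * ((1 + 'i) * (pa * pb)) /\ r' ^+ 2 = w' * ((1 - 'i) * B)].
  case: rr' => [[-> ->] | [-> ->]]; first by exists 1, 1; rewrite !mul1r.
  exists (- 'i), 'i; split; [exact: in_OkN | by [] | | split].
  - by rewrite mulNr -expr2 i2 opprK.
  - by rewrite [RHS]mulrA mulrDr mulr1 mulNr -expr2 i2 opprK addrC.
  - by rewrite [RHS]mulrA mulrDr mulr1 mulrN -expr2 i2 opprK addrC.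
have OA := in_OkM Opa Opb.
have Oal := sqrt_form_in_Ok Oeps ky ky' Ow wK OA dAB r2 r'2 sqrt_eps.
have [be kbe albe] := sqrt_form_unit d_gt0 Oeps Oeps'.1 epsK ky ky' Ow Ow'.1 wK
  OA kB dAB r2 r'2 sqrt_eps.
apply: (ideal_above3_principal H0i Hapa Hbpb Oal kbe albe (in_OkM Oeps Ow)
  (in_OkM Oeps' Ow')); first by rewrite mulrACA epsK wK mulr1.
by rewrite (sqrt_form_sqr eps r2) !mulrA.
Qed.
Lemma has_form_principal d (eps eps' pa pb pc pe : algC) H0 Ha Hb Hc He :
  (0 < d)%N -> in_Ok d eps -> in_Ok d eps' -> eps * eps' = 1 ->
  in_Ok d pa -> in_Ok d pb -> in_Ok d pc -> in_Ok d pe ->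
  2%:R * (pa * pb * (pc * pe)) = d%:R -> has_form eps (pa * pb) (pc * pe) ->
  ideal_above d (1 + 'i) H0 -> ideal_above d pa Ha -> ideal_above d pb Hb ->
  ideal_above d pc Hc -> ideal_above d pe He ->
  is_principal d (ideal_mul (ideal_mul H0 Ha) Hb) /\
  is_principal d (ideal_mul (ideal_mul H0 Hc) He).
Proof.
move=> d0 Oeps Oeps' epseps' Opa Opb Opc Ope dAB [y1 [y2 [r1 [r2 [Gy1 Gy2 rr sqrt_eps]]]]].
move=> H0i Hapa Hbpb Hcpc Hepe.
have [O1 Oi] := (in_Ok_int d 1, in_Ok_i d).
have ky1 : in_k d (y1 * (1 + 'i)) by apply: (in_OkM (in_Ok_gauss d Gy1) (in_OkD O1 Oi)).1.
have ky2 : in_k d (y2 * (1 - 'i)).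
  by apply: (in_OkM (in_Ok_gauss d Gy2) (in_OkD O1 (in_OkN Oi))).1.
split.
  exact: (sqrt_form_principal d0 Oeps Oeps' epseps' ky1 ky2 Opa Opb
    (in_OkM Opc Ope).1 dAB rr sqrt_eps H0i Hapa Hbpb).
rewrite addrC in sqrt_eps; apply: (sqrt_form_principal d0 Oeps Oeps' epseps'
  ky2 ky1 Opc Ope (in_OkM Opa Opb).1 _ _ sqrt_eps H0i Hcpc Hepe).
- by rewrite [_ * (pa * pb)]mulrC.
- by case: rr => [[? ?] | [? ?]]; [right | left].
Qed.

Lemma mul_conj_gauss_2i (a b : int) :
  (a%:~R + 2%:R * 'i * b%:~R) * (a%:~R - 2%:R * 'i * b%:~R) = (a ^+ 2 + 4 * b ^+ 2)%:~R :> algC.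
Proof.
rewrite rmorphD rmorphM !rmorphXn /=.
transitivity (a%:~R ^+ 2 - 4%:R * 'i ^+ 2 * b%:~R ^+ 2 : algC); first by ring.
by rewrite sqrCi mulrN1 mulNr opprK.
Qed.

Theorem lemma42 (p1 p2 : nat) (e f g h : int) (eps : algC)
  (H0 H1 H2 H3 H4 : algC -> Prop) :
  prime p1 -> prime p2 -> (p1 %% 4 = 1)%N -> (p2 %% 4 = 1)%N ->
  p1%:Z = e ^+ 2 + 4 * f ^+ 2 -> p2%:Z = g ^+ 2 + 4 * h ^+ 2 ->
  let d := (2 * p1 * p2)%N in
  let pi1 := e%:~R + 2%:R * 'i * f%:~R : algC in
  let pi2 := e%:~R - 2%:R * 'i * f%:~R : algC in
  let pi3 := g%:~R + 2%:R * 'i * h%:~R : algC in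
  let pi4 := g%:~R - 2%:R * 'i * h%:~R : algC in
  fund_unit d eps -> Qsqrt_norm_is d eps (-1) ->
  ideal_above d (1 + 'i) H0 ->
  ideal_above d pi1 H1 -> ideal_above d pi2 H2 ->
  ideal_above d pi3 H3 -> ideal_above d pi4 H4 ->
  (has_form eps (pi1 * pi3) (pi2 * pi4) ->
     is_principal d (ideal_mul (ideal_mul H0 H1) H3) /\
     is_principal d (ideal_mul (ideal_mul H0 H2) H4)) /\
  (has_form eps (pi1 * pi4) (pi2 * pi3) ->
     is_principal d (ideal_mul (ideal_mul H0 H1) H4) /\
     is_principal d (ideal_mul (ideal_mul H0 H2) H3)).
Proof.
move=> pr1 pr2 _ _ p1E p2E d pi1 pi2 pi3 pi4 [[Qeps Aeps Aeps'] eps_gt1 _] Neps.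
move=> H0i H1i H2i H3i H4i.
have d0 : (0 < d)%N by rewrite !muln_gt0 !prime_gt0.
have Oeps : in_Ok d eps by split=> //; apply: in_k_Qsqrt.
have Oeps' : in_Ok d eps^-1.
  by split=> //; apply/in_k_Qsqrt/(Qsqrt_norm_inv Neps); rewrite oppr_eq0 oner_eq0.
have epsV : eps * eps^-1 = 1 by rewrite divff // gt_eqF // (lt_trans ltr01 eps_gt1).
have n1 : pi1 * pi2 = p1%:R by rewrite mul_conj_gauss_2i -p1E.
have n2 : pi3 * pi4 = p2%:R by rewrite mul_conj_gauss_2i -p2E.
have O2i (b : int) : in_Ok d (2%:R * 'i * b%:~R).
  by apply: in_OkM; [apply: in_OkM; [exact: (in_Ok_int d 2) | exact: in_Ok_i] | exact: in_Ok_int].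
have O1 := in_OkD (in_Ok_int d e) (O2i f); have O2 := in_OkD (in_Ok_int d e) (in_OkN (O2i f)).
have O3 := in_OkD (in_Ok_int d g) (O2i h); have O4 := in_OkD (in_Ok_int d g) (in_OkN (O2i h)).
have dE13 : 2%:R * (pi1 * pi3 * (pi2 * pi4)) = d%:R.
  by rewrite /d !natrM -n1 -n2; ring.
have dE14 : 2%:R * (pi1 * pi4 * (pi2 * pi3)) = d%:R.
  by rewrite /d !natrM -n1 -n2; ring.
split=> form.
  exact: (has_form_principal d0 Oeps Oeps' epsV O1 O3 O2 O4 dE13 form H0i H1i H3i H2i H4i).
exact: (has_form_principal d0 Oeps Oeps' epsV O1 O4 O2 O3 dE14 form H0i H1i H4i H2i H3i).
Qed.
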